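(* For any integer $n \geq 2$ and any integer $m \geq n$ there are $n+1$ translates $A_0, A_1, \dots, A_n$ of the set $D_n^m$ (defined below) whose interiors are pairwise disjoint, but such that $A_0$ touches every $A_i$ for $1 \leq i \leq n$ (i.e. $A_0 \cap A_i \neq \emptyset$). In particular, for every $n > 0$ there is a planar topological disk $A_0$ and $n$ translates $A_1,\dots,A_n$ of it such that $A_0,\dots,A_n$ have pairwise disjoint interiors and each $A_i$ ($1\le i\le n$) touches $A_0$.
   Context: Let $s_1, s_2, \dots$ be the sequence with $s_i = 1 + \nu_2(i)$, where $\nu_2(i)$ is the exponent of $2$ in the prime factorization of $i$ (so $s_i$ is the position, counted from the right, of the lowest $1$ bit of $i$ in binary; the sequence begins $1,2,1,3,1,2,1,4,\dots$). For $i \geq 1$ put $y_i = \sum_{j=1}^{i-1} s_j$ (so $y_1 = 0$). For integers $m \geq 2$, $n \geq 1$, define the bars $B_i = [(i-1)m,\, im] \times [y_i,\, y_i + 1]$ for $1 \leq i \leq 2^n$, and the connectors $V_i = [im-1,\, im] \times [y_i + 1,\, y_{i+1} + 1]$ for $1 \leq i \leq 2^n - 1$. Define $D_n^m = \bigcup_{i=1}^{2^n} B_i \cup \bigcup_{i=1}^{2^n-1} V_i \subset \mathbb{R}^2$; this is a topological disk (Jordan region). Two sets touch if they intersect; here the touching translates have disjoint interiors. *)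

From Stdlib Require Import Reals Lra Lia Arith Bool.
Open Scope R_scope.

(* 2-adic valuation nu_2(i) (for i >= 1), computed with fuel i (nu_2 i <= i). *)
Fixpoint nu2_aux (fuel i : nat) : nat :=
  match fuel with
  | O => O
  | S f => if andb (0 <? i)%nat (i mod 2 =? 0)%nat then S (nu2_aux f (i / 2)) else O
  end.
Definition nu2 (i : nat) : nat := nu2_aux i i.

Definition s_seq (i : nat) : nat := S (nu2 i).

Fixpoint ssum (k : nat) : nat :=
  match k with
  | O => O
  | S k' => (ssum k' + s_seq (S k'))%nat
  end.

Definition y_seq (i : nat) : nat := ssum (i - 1).

Definition in_bar (m i : nat) (p : R * R) : Prop :=
  INR (i - 1) * INR m <= fst p <= INR i * INR m /\
  INR (y_seq i) <= snd p <= INR (y_seq i) + 1.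

Definition in_conn (m i : nat) (p : R * R) : Prop :=
  INR i * INR m - 1 <= fst p <= INR i * INR m /\
  INR (y_seq i) + 1 <= snd p <= INR (y_seq (S i)) + 1.

Definition Dnm (n m : nat) (p : R * R) : Prop :=
  exists i : nat,
    ((1 <= i <= 2 ^ n)%nat /\ in_bar m i p) \/
    ((1 <= i <= 2 ^ n - 1)%nat /\ in_conn m i p).

Definition translate (A : R * R -> Prop) (t : R * R) (p : R * R) : Prop :=
  A (fst p - fst t, snd p - snd t).

Definition interior2 (A : R * R -> Prop) (p : R * R) : Prop :=
  exists eps : R, 0 < eps /\
    forall q : R * R,
      (fst q - fst p)^2 + (snd q - snd p)^2 < eps^2 -> A q.

From Stdlib Require Import Reals Lra Lia Arith Bool ZArith.

(* All translation vectors are integral and D_n^m is a union of closed unit lattice squares,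
   so two translates with overlapping interiors share a lattice square, and everything reduces
   to the arithmetic of the ruler sums F(k) = s_1 + ... + s_k = y_(k+1).  F is superadditive,
   additive on dyadic blocks (F(q 2^r + l) = F(q 2^r) + F(l) for l < 2^r), and s_j <= r for
   0 < j < 2^r.  The translate A_i (1 <= i <= n) is shifted right by 2^n - 2^(n-i+1) bars plus
   i - 1 units and lifted so that its bar B_(2^(n-i)) rests on top of the connector
   V_(2^n - 2^(n-i)) of A_0.  The extra i - 1 units keep the connectors of different translates
   in different lattice columns, and the two facts about F show that no staircase climbs into
   another. *)

Section RulerSequence.
Local Open Scope nat_scope.

Lemma nu2_aux_fuel f f' i : i <= f -> i <= f' -> nu2_aux f i = nu2_aux f' i.
Proof.
  revert f' i; induction f as [|f IHf]; intros [|f'] i Hf Hf';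
    try (replace i with 0 by lia; reflexivity).
  cbn [nu2_aux]. destruct ((0 <? i) && (i mod 2 =? 0)) eqn:Hi; [|reflexivity].
  apply andb_prop in Hi as [Hi _]; apply Nat.ltb_lt in Hi.
  assert (i / 2 < i) by (apply Nat.div_lt; lia).
  f_equal; apply IHf; lia.
Qed.

Lemma s_seq_double k : 1 <= k -> s_seq (2 * k) = S (s_seq k).
Proof.
  intros Hk. unfold s_seq, nu2. f_equal.
  replace (2 * k) with (S (2 * k - 1)) at 1 by lia. cbn [nu2_aux].
  replace ((0 <? 2 * k) && (2 * k mod 2 =? 0)) with true.
  - replace (2 * k / 2) with k by (rewrite Nat.mul_comm, Nat.div_mul; lia).
    f_equal. apply nu2_aux_fuel; lia.
  - symmetry; apply andb_true_intro; split.
    + apply Nat.ltb_lt; lia.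
    + apply Nat.eqb_eq. rewrite Nat.mul_comm. apply Nat.Div0.mod_mul.
Qed.

Lemma s_seq_double_add1 k : s_seq (2 * k + 1) = 1.
Proof.
  unfold s_seq, nu2. rewrite Nat.add_1_r at 1. cbn [nu2_aux].
  replace ((2 * k + 1) mod 2 =? 0) with false.
  - now rewrite andb_false_r.
  - symmetry; apply Nat.eqb_neq.
    rewrite Nat.add_comm, Nat.mul_comm, Nat.Div0.mod_add. discriminate.
Qed.

Lemma s_seq_pow2 r : s_seq (2 ^ r) = S r.
Proof.
  induction r as [|r IHr]; [reflexivity|].
  rewrite Nat.pow_succ_r', s_seq_double, IHr; [reflexivity|].
  pose proof (Nat.pow_nonzero 2 r); lia.
Qed.

Lemma s_seq_le j r : 1 <= j -> j < 2 ^ r -> s_seq j <= r.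
Proof.
  revert j; induction r as [|r IHr]; intros j Hj Hjr; [simpl in Hjr; lia|].
  rewrite Nat.pow_succ_r' in Hjr.
  destruct (Nat.Even_or_Odd j) as [[k ->]|[k ->]].
  - rewrite s_seq_double by lia. specialize (IHr k); lia.
  - rewrite s_seq_double_add1; lia.
Qed.

Lemma ssum_double k : ssum (2 * k) = ssum k + 2 * k.
Proof.
  induction k as [|k IHk]; [reflexivity|].
  replace (2 * S k) with (S (S (2 * k))) by lia. cbn [ssum].
  replace (S (2 * k)) with (2 * k + 1) by lia.
  replace (S (2 * k + 1)) with (2 * S k) by lia.
  rewrite IHk, s_seq_double_add1, s_seq_double by lia. lia.
Qed.

Lemma ssum_double_add1 k : ssum (2 * k + 1) = ssum k + 2 * k + 1.
Proof.
  replace (2 * k + 1) with (S (2 * k)) by lia. cbn [ssum].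
  replace (S (2 * k)) with (2 * k + 1) by lia.
  rewrite ssum_double, s_seq_double_add1. lia.
Qed.

Lemma ssum_le_mono a b : a <= b -> ssum a <= ssum b.
Proof. induction 1; cbn [ssum]; lia. Qed.

Lemma ssum_superadditive u v : ssum u + ssum v <= ssum (u + v).
Proof.
  revert v; induction u as [u IHu] using lt_wf_ind; intros v.
  destruct u as [|u']; [reflexivity|]. set (u := S u') in *.
  destruct (Nat.Even_or_Odd u) as [[a Ha]|[a Ha]];
  destruct (Nat.Even_or_Odd v) as [[b ->]|[b ->]]; rewrite Ha;
  specialize (IHu a ltac:(lia) b).
  - replace (2 * a + 2 * b) with (2 * (a + b)) by lia. rewrite !ssum_double; lia.
  - replace (2 * a + (2 * b + 1)) with (2 * (a + b) + 1) by lia.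
    rewrite ssum_double, !ssum_double_add1; lia.
  - replace (2 * a + 1 + 2 * b) with (2 * (a + b) + 1) by lia.
    rewrite ssum_double, !ssum_double_add1; lia.
  - replace (2 * a + 1 + (2 * b + 1)) with (2 * (a + b + 1)) by lia.
    pose proof (ssum_le_mono (a + b) (a + b + 1) ltac:(lia)).
    rewrite ssum_double, !ssum_double_add1; lia.
Qed.

Lemma ssum_mul_pow2_add r q l : l < 2 ^ r -> ssum (q * 2 ^ r + l) = ssum (q * 2 ^ r) + ssum l.
Proof.
  revert q l; induction r as [|r IHr]; intros q l Hl.
  - simpl in Hl. replace l with 0 by lia. rewrite Nat.add_0_r. cbn [ssum]. lia.
  - rewrite Nat.pow_succ_r' in *.
    replace (q * (2 * 2 ^ r)) with (2 * (q * 2 ^ r)) by lia.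
    destruct (Nat.Even_or_Odd l) as [[k ->]|[k ->]].
    + replace (2 * (q * 2 ^ r) + 2 * k) with (2 * (q * 2 ^ r + k)) by lia.
      rewrite !ssum_double, IHr by lia. lia.
    + replace (2 * (q * 2 ^ r) + (2 * k + 1)) with (2 * (q * 2 ^ r + k) + 1) by lia.
      rewrite ssum_double, !ssum_double_add1, IHr by lia. lia.
Qed.

End RulerSequence.

Section LatticeCells.
Local Open Scope nat_scope.

Definition bar_shift (n k : nat) : nat := 2 ^ n - 2 ^ (n - k).

Lemma ssum_bar_shift_add n k x :
  k <= n -> x < 2 ^ (n - k) -> ssum (bar_shift n k + x) = ssum (bar_shift n k) + ssum x.
Proof.
  intros Hk Hx.
  replace (bar_shift n k) with ((2 ^ k - 1) * 2 ^ (n - k)).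
  - now apply ssum_mul_pow2_add.
  - unfold bar_shift. rewrite Nat.mul_sub_distr_r, <- Nat.pow_add_r.
    replace (k + (n - k)) with n by lia. lia.
Qed.

(* The unit square [x, x + 1] x [y, y + 1] lies in D_n^m: it sits at offset r in the bar
   B_(i+1), or, when r = m - 1, in the connector V_(i+1) rising from its right end. *)
Definition cell (n m x y : nat) : Prop :=
  exists i r, x = i * m + r /\ r < m /\ i < 2 ^ n /\
    (y = ssum i \/ (S r = m /\ S i < 2 ^ n /\ ssum i < y <= ssum (S i))).

Lemma column_shift m i1 r1 i2 r2 c d :
  r1 < m -> r2 < m -> d < m -> i1 * m + r1 = i2 * m + r2 + c * m + d ->
  (i1 = i2 + c /\ r1 = r2 + d) \/ (i1 = S (i2 + c) /\ r1 + m = r2 + d).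
Proof.
  intros Hr1 Hr2 Hd Hx.
  destruct (Nat.lt_ge_cases (r2 + d) m) as [Hlt|Hge]; [left|right].
  - apply (Nat.div_mod_unique m); lia.
  - enough (i1 = S (i2 + c) /\ r1 = r2 + d - m) by lia.
    apply (Nat.div_mod_unique m); lia.
Qed.

Lemma cells_disjoint_shift n m c d x1 y1 x2 y2 :
  1 <= d < m -> cell n m x1 y1 -> cell n m x2 y2 ->
  x1 = x2 + c * m + d -> y1 + d = y2 + ssum c -> False.
Proof.
  intros Hd (i1 & r1 & -> & Hr1 & _ & Hy1) (i2 & r2 & -> & Hr2 & _ & Hy2) Hx Hy.
  destruct (column_shift m i1 r1 i2 r2 c d) as [[-> Hr]|[-> Hr]]; try lia.
  - pose proof (ssum_superadditive i2 c). cbn [ssum] in *. lia.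
  - pose proof (ssum_superadditive (S i2) c).
    rewrite Nat.add_succ_l in *. cbn [ssum] in *. lia.
Qed.

Lemma cells_disjoint_bar_shift n m k d x1 y1 x2 y2 :
  k <= n -> d < m -> cell n m x1 y1 -> cell n m x2 y2 ->
  x1 = x2 + bar_shift n k * m + d ->
  y1 = y2 + ssum (bar_shift n k) + (n - k) + 1 -> False.
Proof.
  intros Hk Hd (i1 & r1 & -> & Hr1 & Hi1 & Hy1) (i2 & r2 & -> & Hr2 & _ & Hy2) Hx Hy.
  assert (Hn : 2 ^ n = bar_shift n k + 2 ^ (n - k)).
  { unfold bar_shift. pose proof (Nat.pow_le_mono_r 2 (n - k) n). lia. }
  assert (Hstep : forall j, S j < 2 ^ (n - k) ->
    ssum (bar_shift n k + S j) <= ssum (bar_shift n k) + ssum j + (n - k)).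
  { intros j Hj. rewrite ssum_bar_shift_add by lia. cbn [ssum].
    pose proof (s_seq_le (S j) (n - k)). lia. }
  destruct (column_shift m i1 r1 i2 r2 (bar_shift n k) d) as [[-> Hr]|[-> Hr]]; try lia;
    replace (S (i2 + bar_shift n k)) with (bar_shift n k + S i2) in * by lia;
    specialize (Hstep i2).
  - rewrite Nat.add_comm, ssum_bar_shift_add in Hy1 by lia. lia.
  - lia.
Qed.

End LatticeCells.

Lemma IZR_cell_bounds (a b X : Z) (u : R) :
  IZR a <= u <= IZR b -> IZR X < u < IZR X + 1 -> (a <= X < b)%Z.
Proof.
  intros Hab HX. split.
  - apply Z.lt_succ_r, lt_IZR. rewrite succ_IZR. lra.
  - apply lt_IZR. lra.
Qed.

Lemma y_seq_succ i : y_seq (S i) = ssum i.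
Proof. unfold y_seq. f_equal. lia. Qed.

Lemma Dnm_cell n m (X Y : Z) (u v : R) : (1 <= m)%nat ->
  Dnm n m (u, v) -> IZR X < u < IZR X + 1 -> IZR Y < v < IZR Y + 1 ->
  (0 <= X)%Z /\ (0 <= Y)%Z /\ cell n m (Z.to_nat X) (Z.to_nat Y).
Proof.
  intros Hm [[|i] [[Hi [Hu Hv]] | [Hi [Hu Hv]]]] HX HY; try lia;
    simpl fst in Hu; simpl snd in Hv; rewrite !y_seq_succ in Hv;
    rewrite ?Nat.sub_succ, ?Nat.sub_0_r in Hu;
    rewrite <- !mult_INR, !INR_IZR_INZ in Hu; rewrite !INR_IZR_INZ in Hv.
  - pose proof (IZR_cell_bounds _ _ X u Hu HX).
    pose proof (IZR_cell_bounds (Z.of_nat (ssum i)) (Z.of_nat (ssum i) + 1) Y v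
      ltac:(rewrite plus_IZR; lra) HY).
    split; [lia|split; [lia|]].
    exists i, (Z.to_nat X - i * m)%nat. lia.
  - pose proof (IZR_cell_bounds (Z.of_nat (S i * m) - 1) (Z.of_nat (S i * m)) X u
      ltac:(rewrite minus_IZR; lra) HX).
    pose proof (IZR_cell_bounds (Z.of_nat (ssum i) + 1) (Z.of_nat (ssum (S i)) + 1) Y v
      ltac:(rewrite !plus_IZR; lra) HY).
    split; [lia|split; [lia|]].
    exists i, (m - 1)%nat. cbn [ssum] in *. lia.
Qed.

Lemma off_lattice_near (x eps : R) : 0 < eps ->
  exists (z : Z) (r : R), IZR z < r < IZR z + 1 /\ 0 <= r - x <= eps / 2.
Proof.
  intros Heps. destruct (archimed x) as [Hup1 Hup2].
  set (d := Rmin (eps / 2) ((IZR (up x) - x) / 2)).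
  assert (Hd : 0 < d /\ d <= eps / 2 /\ d <= (IZR (up x) - x) / 2).
  { split; [apply Rmin_glb_lt; lra|split; [apply Rmin_l|apply Rmin_r]]. }
  exists (up x - 1)%Z, (x + d). rewrite minus_IZR. lra.
Qed.

Lemma translate_Dnm_cell n m a b (z w : Z) (r s : R) : (1 <= m)%nat ->
  translate (Dnm n m) (INR a, INR b) (r, s) ->
  IZR z < r < IZR z + 1 -> IZR w < s < IZR w + 1 ->
  exists x y, cell n m x y /\ Z.of_nat (x + a) = z /\ Z.of_nat (y + b) = w.
Proof.
  intros Hm HD Hr Hs. unfold translate in HD; simpl fst in HD; simpl snd in HD.
  destruct (Dnm_cell n m (z - Z.of_nat a) (w - Z.of_nat b) _ _ Hm HD)
    as (Hz & Hw & Hcell); [rewrite minus_IZR, <- INR_IZR_INZ; lra..|].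
  exists (Z.to_nat (z - Z.of_nat a)), (Z.to_nat (w - Z.of_nat b)). split; [exact Hcell|lia].
Qed.

Lemma interiors_share_cell n m a1 b1 a2 b2 (p : R * R) : (1 <= m)%nat ->
  interior2 (translate (Dnm n m) (INR a1, INR b1)) p ->
  interior2 (translate (Dnm n m) (INR a2, INR b2)) p ->
  exists x1 y1 x2 y2, cell n m x1 y1 /\ cell n m x2 y2 /\
    (x1 + a1 = x2 + a2)%nat /\ (y1 + b1 = y2 + b2)%nat.
Proof.
  intros Hm [e1 [He1 H1]] [e2 [He2 H2]].
  set (e := Rmin e1 e2).
  assert (He : 0 < e /\ e <= e1 /\ e <= e2).
  { split; [apply Rmin_glb_lt; lra|split; [apply Rmin_l|apply Rmin_r]]. }
  destruct (off_lattice_near (fst p) e) as (z & r & Hz & Hr); [lra|].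
  destruct (off_lattice_near (snd p) e) as (w & s & Hw & Hs); [lra|].
  assert (Hq : forall e', e <= e' -> (r - fst p) ^ 2 + (s - snd p) ^ 2 < e' ^ 2)
    by (intros; nra).
  destruct (translate_Dnm_cell n m a1 b1 z w r s Hm (H1 (r, s) (Hq e1 ltac:(lra))) Hz Hw)
    as (x1 & y1 & Hc1 & Hx1 & Hy1).
  destruct (translate_Dnm_cell n m a2 b2 z w r s Hm (H2 (r, s) (Hq e2 ltac:(lra))) Hz Hw)
    as (x2 & y2 & Hc2 & Hx2 & Hy2).
  exists x1, y1, x2, y2. repeat split; auto; lia.
Qed.

Definition shift_x (n m i : nat) : nat :=
  match i with O => O | S k => bar_shift n k * m + k end.

Definition shift_y (n i : nat) : nat :=
  match i with O => O | S k => ssum (bar_shift n k) + (n - k) + 1 end.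

Definition shift (n m i : nat) : R * R := (INR (shift_x n m i), INR (shift_y n i)).

Lemma translates_interiors_disjoint n m i j (p : R * R) :
  (i < j <= n)%nat -> (n <= m)%nat ->
  interior2 (translate (Dnm n m) (shift n m i)) p ->
  interior2 (translate (Dnm n m) (shift n m j)) p -> False.
Proof.
  intros Hij Hnm Hpi Hpj.
  destruct (interiors_share_cell n m _ _ _ _ p ltac:(lia) Hpi Hpj)
    as (x1 & y1 & x2 & y2 & Hc1 & Hc2 & Hx & Hy).
  destruct j as [|b]; [lia|].
  destruct i as [|a]; cbn [shift_x shift_y] in Hx, Hy.
  - exact (cells_disjoint_bar_shift n m b b x1 y1 x2 y2 ltac:(lia) ltac:(lia) Hc1 Hc2
      ltac:(lia) ltac:(lia)).
  - set (c := (bar_shift n b - bar_shift n a)%nat).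
    assert (Hc : (bar_shift n b = bar_shift n a + c /\ c < 2 ^ (n - a))%nat).
    { unfold c, bar_shift.
      pose proof (Nat.pow_lt_mono_r 2 (n - b) (n - a) ltac:(lia) ltac:(lia)).
      pose proof (Nat.pow_le_mono_r 2 (n - a) n ltac:(lia) ltac:(lia)).
      pose proof (Nat.pow_nonzero 2 (n - b) ltac:(lia)). lia. }
    destruct Hc as [Hbc Hca].
    rewrite Hbc, ssum_bar_shift_add, Nat.mul_add_distr_r in * by lia.
    exact (cells_disjoint_shift n m c (b - a) x1 y1 x2 y2 ltac:(lia) Hc1 Hc2
      ltac:(lia) ltac:(lia)).
Qed.

Lemma translate_INR (A : R * R -> Prop) a b x y X Y :
  A (INR x, INR y) -> (x + a = X)%nat -> (y + b = Y)%nat ->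
  translate A (INR a, INR b) (INR X, INR Y).
Proof.
  intros HA <- <-. unfold translate; simpl fst; simpl snd.
  rewrite !plus_INR.
  replace (INR x + INR a - INR a) with (INR x) by ring.
  replace (INR y + INR b - INR b) with (INR y) by ring.
  exact HA.
Qed.

Lemma Dnm_bar_bottom n m h x :
  (1 <= h <= 2 ^ n)%nat -> ((h - 1) * m <= x <= h * m)%nat ->
  Dnm n m (INR x, INR (ssum (h - 1))).
Proof.
  intros Hh Hx. exists h. left. split; [exact Hh|].
  unfold in_bar, y_seq; simpl fst; simpl snd.
  rewrite <- !mult_INR. split; split; try lra; apply le_INR; lia.
Qed.

Lemma Dnm_connector_top n m i :
  (1 <= i <= 2 ^ n - 1)%nat -> Dnm n m (INR (i * m), INR (ssum i + 1)).
Proof.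
  intros Hi. exists i. right. split; [exact Hi|].
  unfold in_conn; simpl fst; simpl snd. rewrite y_seq_succ, <- mult_INR, plus_INR.
  pose proof (le_INR _ _ (ssum_le_mono (i - 1) i ltac:(lia))).
  unfold y_seq. simpl INR. lra.
Qed.

Lemma translate_touches_base n m k : (k < n)%nat -> (n <= m)%nat ->
  exists p : R * R,
    translate (Dnm n m) (shift n m 0) p /\ translate (Dnm n m) (shift n m (S k)) p.
Proof.
  intros Hk Hnm.
  set (h := (2 ^ (n - S k))%nat). set (B := bar_shift n k).
  assert (Hh : (2 ^ (n - k) = 2 * h)%nat).
  { unfold h. rewrite <- Nat.pow_succ_r'. f_equal. lia. }
  assert (HB : (B + 2 * h = 2 ^ n)%nat).
  { unfold B, bar_shift. pose proof (Nat.pow_le_mono_r 2 (n - k) n). lia. }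
  assert (Hh1 : (1 <= h)%nat) by (pose proof (Nat.pow_nonzero 2 (n - S k)); lia).
  assert (HsI : ssum (B + h) = (ssum B + ssum (h - 1) + (n - k))%nat).
  { unfold B. rewrite ssum_bar_shift_add by lia.
    replace h with (S (h - 1)) at 1 by lia. cbn [ssum].
    replace (S (h - 1)) with h by lia. unfold h. rewrite s_seq_pow2. lia. }
  assert (Hkh : (k <= h * m)%nat) by nia.
  exists (INR ((B + h) * m), INR (ssum (B + h) + 1)). split.
  - apply (translate_INR _ _ _ ((B + h) * m) (ssum (B + h) + 1));
      cbn [shift_x shift_y]; [|lia|lia].
    apply Dnm_connector_top. lia.
  - apply (translate_INR _ _ _ (h * m - k) (ssum (h - 1))); cbn [shift_x shift_y]; fold B.
    + apply Dnm_bar_bottom; nia.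
    + nia.
    + lia.
Qed.

Theorem theorem3 (n m : nat) (hn : (2 <= n)%nat) (hm : (n <= m)%nat) :
  exists t : nat -> R * R,
    (forall i j : nat, (i <= n)%nat -> (j <= n)%nat -> i <> j ->
       forall p : R * R,
         ~ (interior2 (translate (Dnm n m) (t i)) p /\
            interior2 (translate (Dnm n m) (t j)) p)) /\
    (forall i : nat, (1 <= i <= n)%nat ->
       exists p : R * R,
         translate (Dnm n m) (t 0%nat) p /\ translate (Dnm n m) (t i) p).
Proof.
  exists (shift n m). split.
  - intros i j Hi Hj Hij p [Hpi Hpj].
    destruct (proj1 (Nat.lt_gt_cases i j) Hij) as [Hlt|Hgt].
    + exact (translates_interiors_disjoint n m i j p ltac:(lia) hm Hpi Hpj).
    + exact (translates_interiors_disjoint n m j i p ltac:(lia) hm Hpj Hpi).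
  - intros [|k] Hk; [lia|]. apply translate_touches_base; lia.
Qed.
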